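(* Let $n\geq 2$ and let $f,h:S^1\to S^1$ be orientation-preserving homeomorphisms satisfying $h\circ f\circ h^{-1}=f^n$. Then there exists $l\in\mathbb{N}$ such that the rotation number of $f$ is $\rho(f)=\frac{l}{n-1}$.
   Context: $\rho(f)$ denotes the Poincaré rotation number of an orientation-preserving circle homeomorphism, taken in $\mathbb{R}/\mathbb{Z}$. *)

From Stdlib Require Import Reals Lra ZArith.
From Coquelicot Require Import Coquelicot.
Open Scope R_scope.

(* The circle S^1 = R/Z, represented by the points of [0,1). *)
Definition circle : Type := {x : R | 0 <= x < 1}.

Lemma frac_in_unit (x : R) : 0 <= x - IZR (Int_part x) < 1.
Proof. destruct (base_Int_part x) as [H1 H2]. lra. Qed.

Definition proj (x : R) : circle := exist _ (x - IZR (Int_part x)) (frac_in_unit x).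

Definition is_lift (f : circle -> circle) (F : R -> R) : Prop :=
  (forall x, continuity_pt F x) /\
  (forall x y, x < y -> F x < F y) /\
  (forall x, F (x + 1) = F x + 1) /\
  (forall x, proj (F x) = f (proj x)).

Definition orient_pres_homeo (f : circle -> circle) : Prop :=
  exists F, is_lift f F.

Definition iterate {T : Type} (k : nat) (g : T -> T) : T -> T := Nat.iter k g.

(* rho(f) = r mod 1, where r is a real number: for every lift F of f,
   F^k(0)/k converges to a real congruent to r modulo 1. *)
Definition rotation_number_is (f : circle -> circle) (r : R) : Prop :=
  forall F, is_lift f F ->
    exists m : Z, is_lim_seq (fun k => iterate k F 0 / INR k) (r + IZR m).

(* A lift F of f has a translation number tau(F) = lim F^k(0)/k, and in fact
   F^k(0) - k tau(F) stays bounded.  Lifting h o f = f^n o h gives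
   H o F = (F^n + c) o H for an integer c (the difference is continuous and
   integer valued).  Translation numbers are invariant under semiconjugacy by a
   lift, multiply under iteration and shift under integer translation, so
   tau(F) = n tau(F) + c, i.e. tau(F) = -c/(n-1), which is congruent modulo 1
   to (|c|(n-1) - c)/(n-1) with a nonnegative numerator. *)
From Stdlib Require Import Reals ZArith Lra Lia.
From Coquelicot Require Import Coquelicot.
Open Scope R_scope.

Definition int_transl_invariant (G : R -> R) : Prop :=
  forall (z : Z) x, G (x + IZR z) = G x + IZR z.

Definition translation_number (G : R -> R) (t : R) : Prop :=
  exists C, forall k, Rabs (iterate k G 0 - INR k * t) <= C.

Lemma iterate_S {T} k (g : T -> T) x : iterate (S k) g x = g (iterate k g x).
Proof. reflexivity. Qed.

Lemma iterate_add {T} a b (g : T -> T) x :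
  iterate (a + b) g x = iterate a g (iterate b g x).
Proof. induction a as [|a IH]; [reflexivity|]. now rewrite Nat.add_succ_l, !iterate_S, IH. Qed.

Lemma iterate_mul {T} a b (g : T -> T) x :
  iterate (a * b) g x = iterate a (iterate b g) x.
Proof. induction a as [|a IH]; [reflexivity|]. simpl. now rewrite iterate_add, IH. Qed.

Lemma int_transl_invariant_of_deg1 G :
  (forall x, G (x + 1) = G x + 1) -> int_transl_invariant G.
Proof.
  intros H1.
  assert (Hnat : forall p x, G (x + INR p) = G x + INR p).
  { induction p as [|p IH]; intros x; [simpl; now rewrite !Rplus_0_r|].
    rewrite S_INR, <- Rplus_assoc, H1, IH. ring. }
  intros z x. destruct (Z_le_gt_dec 0 z).
  - rewrite <- (Z2Nat.id z), <- INR_IZR_INZ by lia. apply Hnat.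
  - assert (E : IZR z = - INR (Z.to_nat (- z))).
    { rewrite INR_IZR_INZ, Z2Nat.id, opp_IZR by lia. ring. }
    rewrite E. specialize (Hnat (Z.to_nat (- z)) (x + - INR (Z.to_nat (- z)))).
    rewrite Rplus_assoc, Rplus_opp_l, Rplus_0_r in Hnat. lra.
Qed.

Lemma iterate_strict_increasing G k :
  strict_increasing G -> strict_increasing (iterate k G).
Proof. intros HG x y Hxy. induction k; [exact Hxy|]. rewrite !iterate_S. now apply HG. Qed.

Lemma iterate_int_transl_invariant G k :
  int_transl_invariant G -> int_transl_invariant (iterate k G).
Proof. intros HG z x. induction k; [reflexivity|]. rewrite !iterate_S, IHk. apply HG. Qed.

Lemma iterate_continuity G k : continuity G -> continuity (iterate k G).
Proof.
  intros HG. induction k.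
  - intros x. apply derivable_continuous_pt, derivable_pt_id.
  - exact (continuity_comp _ _ IHk HG).
Qed.

Lemma iterate_int_shift G G' (c : Z) : int_transl_invariant G ->
  (forall x, G' x = G x + IZR c) ->
  forall k x, iterate k G' x = iterate k G x + INR k * IZR c.
Proof.
  intros HG HG' k x. induction k as [|k IH]; [simpl; ring|].
  rewrite !iterate_S, IH, HG', S_INR.
  replace (INR k * IZR c) with (IZR (Z.of_nat k * c)) by now rewrite mult_IZR, <- INR_IZR_INZ.
  rewrite HG, mult_IZR, <- INR_IZR_INZ. ring.
Qed.

Lemma bounded_multiples_eq0 d C : (forall k, Rabs (INR k * d) <= C) -> d = 0.
Proof.
  intros H. destruct (Req_dec d 0) as [|Hd]; [assumption|exfalso].
  assert (Pd : 0 < Rabs d) by now apply Rabs_pos_lt.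
  destruct (archimed_cor1 (Rabs d / (Rabs C + 1))) as [N [HN HN0]].
  { apply Rdiv_lt_0_compat; [lra|]. pose proof (Rabs_pos C). lra. }
  specialize (H N). rewrite Rabs_mult, Rabs_pos_eq in H by apply pos_INR.
  assert (PN : 0 < INR N) by (apply lt_0_INR; lia).
  apply (Rmult_lt_compat_l (INR N * (Rabs C + 1))) in HN;
    [|pose proof (Rabs_pos C); nra].
  replace (INR N * (Rabs C + 1) * / INR N) with (Rabs C + 1) in HN by (field; lra).
  replace (INR N * (Rabs C + 1) * (Rabs d / (Rabs C + 1))) with (INR N * Rabs d) in HN
    by (field; pose proof (Rabs_pos C); lra).
  pose proof (Rle_abs C). lra.
Qed.

Lemma is_lim_seq_inv_INR : is_lim_seq (fun k => / INR k) 0.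
Proof. apply (is_lim_seq_inv INR p_infty); [exact is_lim_seq_INR | discriminate]. Qed.

Lemma is_lim_seq_bounded_drift (a : nat -> R) t C :
  (forall k, Rabs (a k - INR k * t) <= C) -> is_lim_seq (fun k => a k / INR k) t.
Proof.
  intros Ha.
  assert (Hw : forall s, is_lim_seq (fun k => t + s * / INR k) t).
  { intros s. replace (Finite t) with (Rbar_plus t (Rbar_mult s 0))
      by (simpl; f_equal; ring).
    apply is_lim_seq_plus'; [apply is_lim_seq_const|].
    apply (is_lim_seq_scal_l _ s 0), is_lim_seq_inv_INR. }
  apply (is_lim_seq_le_le_loc (fun k => t + (- C) * / INR k) _
           (fun k => t + C * / INR k)); [|apply Hw|apply Hw].
  exists 1%nat. intros k Hk.
  assert (PK : 0 < INR k) by (apply lt_0_INR; lia).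
  specialize (Ha k). apply Rabs_le_between' in Ha.
  replace (a k / INR k) with (t + (a k - INR k * t) * / INR k) by (field; lra).
  pose proof (Rinv_0_lt_compat _ PK). split; nra.
Qed.

Lemma translation_number_unique G t t' :
  translation_number G t -> translation_number G t' -> t = t'.
Proof.
  intros [C HC] [C' HC'].
  assert (t - t' = 0); [|lra].
  apply (bounded_multiples_eq0 _ (C + C')). intros k.
  replace (INR k * (t - t'))
    with (- (iterate k G 0 - INR k * t) + (iterate k G 0 - INR k * t')) by ring.
  eapply Rle_trans; [apply Rabs_triang|]. rewrite Rabs_Ropp.
  apply Rplus_le_compat; auto.
Qed.

Lemma translation_number_iterate G t n :
  translation_number G t -> translation_number (iterate n G) (INR n * t).
Proof.
  intros [C HC]. exists C. intros k.
  rewrite <- iterate_mul, <- Rmult_assoc, <- mult_INR. apply HC.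
Qed.

Lemma translation_number_int_shift G G' t (c : Z) : int_transl_invariant G ->
  (forall x, G' x = G x + IZR c) ->
  translation_number G t -> translation_number G' (t + IZR c).
Proof.
  intros HG HG' [C HC]. exists C. intros k.
  rewrite (iterate_int_shift G G' c HG HG').
  replace (iterate k G 0 + INR k * IZR c - INR k * (t + IZR c))
    with (iterate k G 0 - INR k * t) by ring.
  apply HC.
Qed.

Section IncreasingDegreeOne.

Variable G : R -> R.
Hypothesis G_incr : strict_increasing G.
Hypothesis G_transl : int_transl_invariant G.

(* Sandwich x between consecutive integers and use that G^m commutes with them. *)
Lemma iterate_displacement_bound m x :
  Rabs (iterate m G x - x - iterate m G 0) <= 1.
Proof.
  pose proof (iterate_strict_increasing G m G_incr) as Hi.
  pose proof (iterate_int_transl_invariant G m G_transl) as Ht.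
  set (j := (up x - 1)%Z).
  destruct (archimed x) as [Hx1 Hx2].
  assert (Hj : IZR j <= x < IZR (j + 1)) by (unfold j; rewrite plus_IZR, minus_IZR; lra).
  assert (E1 := Ht j 0). assert (E2 := Ht (j + 1)%Z 0).
  rewrite Rplus_0_l in E1, E2. rewrite plus_IZR in E2, Hj.
  assert (L1 : iterate m G (IZR j) <= iterate m G x).
  { destruct (Rle_lt_or_eq_dec _ _ (proj1 Hj)) as [Hl|He];
      [left; now apply Hi | rewrite He; lra]. }
  assert (L2 := Hi _ _ (proj2 Hj)).
  apply Rabs_le. lra.
Qed.

Lemma iterate_mul_bound m k :
  Rabs (iterate (m * k) G 0 - INR k * iterate m G 0) <= INR k.
Proof.
  induction k as [|k IH].
  - rewrite Nat.mul_0_r. simpl. rewrite Rmult_0_l, Rminus_0_r, Rabs_R0. lra.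
  - rewrite Nat.mul_succ_r, Nat.add_comm, iterate_add, S_INR.
    pose proof (iterate_displacement_bound m (iterate (m * k) G 0)) as B.
    apply Rabs_le_between' in B. apply Rabs_le_between' in IH.
    apply Rabs_le. lra.
Qed.

Lemma iterate_ratio_close m k : (1 <= m)%nat -> (1 <= k)%nat ->
  Rabs (iterate m G 0 / INR m - iterate k G 0 / INR k) <= / INR m + / INR k.
Proof.
  intros Hm Hk.
  assert (PM : 0 < INR m) by (apply lt_0_INR; lia).
  assert (PK : 0 < INR k) by (apply lt_0_INR; lia).
  pose proof (iterate_mul_bound m k) as B1.
  pose proof (iterate_mul_bound k m) as B2. rewrite Nat.mul_comm in B2.
  replace (iterate m G 0 / INR m - iterate k G 0 / INR k)
    with ((iterate (m * k) G 0 - INR k * iterate m G 0) * (- / (INR m * INR k))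
          + (iterate (m * k) G 0 - INR m * iterate k G 0) * / (INR m * INR k))
    by (field; lra).
  eapply Rle_trans; [apply Rabs_triang|].
  rewrite !Rabs_mult, Rabs_Ropp, Rabs_inv, (Rabs_pos_eq (INR m * INR k)) by nra.
  assert (Pinv : 0 < / (INR m * INR k)) by (apply Rinv_0_lt_compat; nra).
  replace (/ INR m + / INR k) with (INR k * / (INR m * INR k) + INR m * / (INR m * INR k))
    by (field; lra).
  apply Rplus_le_compat; apply Rmult_le_compat_r; lra.
Qed.

Lemma translation_number_exists : exists t, translation_number G t.
Proof.
  set (u := fun k => iterate k G 0 / INR k).
  assert (Cu : ex_lim_seq_cauchy u).
  { intros eps. destruct (archimed_cor1 (eps / 2)) as [N [HN HN0]];
      [destruct eps; simpl; lra|].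
    exists N. intros a b Ha Hb. unfold u.
    pose proof (iterate_ratio_close a b ltac:(lia) ltac:(lia)).
    pose proof (Rinv_le_contravar _ _ (lt_0_INR _ HN0) (le_INR _ _ Ha)).
    pose proof (Rinv_le_contravar _ _ (lt_0_INR _ HN0) (le_INR _ _ Hb)). lra. }
  apply ex_lim_seq_cauchy_corr, Lim_seq_correct' in Cu.
  set (t := real (Lim_seq u)) in Cu.
  exists t, 1. intros [|k]; [simpl; rewrite Rmult_0_l, Rminus_0_r, Rabs_R0; lra|].
  assert (PK : 0 < INR (S k)) by (apply lt_0_INR; lia).
  assert (Hk : Rabs (u (S k) - t) <= / INR (S k)).
  { assert (Hl : is_lim_seq (fun m => / INR (S k) + / INR m) (/ INR (S k))).
    { pose proof (is_lim_seq_plus' _ _ _ _ (is_lim_seq_const (/ INR (S k))) is_lim_seq_inv_INR)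
        as Hl. now rewrite Rplus_0_r in Hl. }
    refine (is_lim_seq_le_loc (fun m => Rabs (u (S k) - u m)) _ _ _ _
              (is_lim_seq_abs _ (u (S k) - t) _) Hl).
    - exists 1%nat. intros m Hm. apply iterate_ratio_close; lia.
    - apply (is_lim_seq_minus' (fun _ => u (S k))); [apply is_lim_seq_const | exact Cu]. }
  unfold u in Hk.
  replace (iterate (S k) G 0 - INR (S k) * t)
    with (INR (S k) * (iterate (S k) G 0 / INR (S k) - t)) by (field; lra).
  rewrite Rabs_mult, Rabs_pos_eq by lra.
  apply (Rmult_le_compat_l (INR (S k))) in Hk; [|lra].
  rewrite Rinv_r in Hk by lra. exact Hk.
Qed.

End IncreasingDegreeOne.

Lemma translation_number_semiconj F G H t :
  strict_increasing G -> int_transl_invariant G ->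
  strict_increasing H -> int_transl_invariant H ->
  (forall x, H (F x) = G (H x)) ->
  translation_number F t -> translation_number G t.
Proof.
  intros Gi Gt Hi Ht Hconj [C HC]. exists (C + 2). intros k.
  assert (Hk : iterate k G (H 0) = H (iterate k F 0)).
  { induction k as [|k IH]; [reflexivity|]. now rewrite !iterate_S, IH, Hconj. }
  pose proof (iterate_displacement_bound G Gi Gt k (H 0)) as BG.
  pose proof (iterate_displacement_bound H Hi Ht 1 (iterate k F 0)) as BH.
  specialize (HC k). simpl in BH. rewrite Hk in BG.
  apply Rabs_le_between' in BG. apply Rabs_le_between' in BH.
  apply Rabs_le_between' in HC. apply Rabs_le. lra.
Qed.

Lemma continuous_int_valued_no_jump d a b :
  continuity d -> (forall x, exists z, d x = IZR z) -> a < b -> ~ d a < d b.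
Proof.
  intros Hc Hz Hab Hlt.
  destruct (Hz a) as [za Ea]. destruct (Hz b) as [zb Eb].
  rewrite Ea, Eb in Hlt. apply lt_IZR in Hlt.
  assert (Hzb : IZR za + 1 <= IZR zb) by (rewrite <- plus_IZR; apply IZR_le; lia).
  destruct (IVT (fun y => d y - (IZR za + 1/2)) a b) as [x [_ Hx]].
  - apply continuity_minus; [exact Hc|]. apply continuity_const. now intros ? ?.
  - exact Hab.
  - rewrite Ea. lra.
  - rewrite Eb. lra.
  - destruct (Hz x) as [zx Ex]. rewrite Ex in Hx.
    assert (za < zx)%Z by (apply lt_IZR; lra).
    assert (zx < za + 1)%Z by (apply lt_IZR; rewrite plus_IZR; lra). lia.
Qed.

Lemma continuous_int_valued_const d :
  continuity d -> (forall x, exists z, d x = IZR z) -> exists c : Z, forall x, d x = IZR c.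
Proof.
  intros Hc Hz.
  assert (Hz' : forall x, exists z, - d x = IZR z).
  { intros x. destruct (Hz x) as [z Ez]. exists (- z)%Z. now rewrite opp_IZR, Ez. }
  assert (Heq : forall a b, a < b -> d a = d b).
  { intros a b Hab.
    pose proof (continuous_int_valued_no_jump d a b Hc Hz Hab).
    pose proof (continuous_int_valued_no_jump (fun y => - d y) a b
                  (continuity_opp _ Hc) Hz' Hab). lra. }
  destruct (Hz 0) as [c Ec]. exists c. intros x. rewrite <- Ec.
  destruct (Rtotal_order x 0) as [H|[H|H]]; [now apply Heq | now subst | symmetry; now apply Heq].
Qed.

Lemma proj_eq_int a b : proj a = proj b -> exists z : Z, a = b + IZR z.
Proof.
  intros H. apply (f_equal (@proj1_sig _ _)) in H. simpl in H.
  exists (Int_part a - Int_part b)%Z. rewrite minus_IZR. lra.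
Qed.

Lemma lift_strict_increasing f F : is_lift f F -> strict_increasing F.
Proof. now intros (_ & Hi & _). Qed.

Lemma lift_int_transl_invariant f F : is_lift f F -> int_transl_invariant F.
Proof. intros (_ & _ & H1 & _). now apply int_transl_invariant_of_deg1. Qed.

Lemma lift_continuity f F : is_lift f F -> continuity F.
Proof. now intros (Hc & _). Qed.

Lemma proj_iterate f F k x : is_lift f F -> proj (iterate k F x) = iterate k f (proj x).
Proof.
  intros (_ & _ & _ & HF). induction k as [|k IH]; [reflexivity|].
  now rewrite !iterate_S, HF, IH.
Qed.

Lemma lift_unique_up_to_int f F F' : is_lift f F -> is_lift f F' ->
  exists c : Z, forall x, F' x = F x + IZR c.
Proof.
  intros HF HF'.
  destruct (continuous_int_valued_const (fun x => F' x - F x)) as [c Ec].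
  - apply continuity_minus; eapply lift_continuity; eassumption.
  - intros x. destruct (proj_eq_int (F' x) (F x)) as [z Ez].
    + destruct HF as (_ & _ & _ & HF). destruct HF' as (_ & _ & _ & HF').
      now rewrite HF, HF'.
    + exists z. lra.
  - exists c. intros x. specialize (Ec x). simpl in Ec. lra.
Qed.

Lemma lift_semiconj_iterate n f h F H : is_lift f F -> is_lift h H ->
  (forall x, h (f x) = iterate n f (h x)) ->
  exists c : Z, forall x, H (F x) = iterate n F (H x) + IZR c.
Proof.
  intros HF HH Hcomm.
  destruct (continuous_int_valued_const (fun x => H (F x) - iterate n F (H x))) as [c Ec].
  - pose proof (lift_continuity f F HF) as Fc. pose proof (lift_continuity h H HH) as Hc.
    apply continuity_minus.
    + exact (continuity_comp _ _ Fc Hc).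
    + exact (continuity_comp _ _ Hc (iterate_continuity F n Fc)).
  - intros x. destruct (proj_eq_int (H (F x)) (iterate n F (H x))) as [z Ez].
    + rewrite (proj_iterate f) by exact HF.
      destruct HH as (_ & _ & _ & HH). destruct HF as (_ & _ & _ & HF).
      now rewrite HH, HF, Hcomm, HH.
    + exists z. lra.
  - exists c. intros x. specialize (Ec x). simpl in Ec. lra.
Qed.

Lemma rotation_number_of_lift f F t (m : Z) :
  is_lift f F -> translation_number F t -> rotation_number_is f (t + IZR m).
Proof.
  intros HF Ht F' HF'.
  destruct (lift_unique_up_to_int f F F' HF HF') as [c Hc].
  exists (c - m)%Z. rewrite minus_IZR.
  replace (t + IZR m + (IZR c - IZR m)) with (t + IZR c) by ring.
  destruct (translation_number_int_shift F F' t c (lift_int_transl_invariant f F HF) Hc Ht)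
    as [C HC].
  exact (is_lim_seq_bounded_drift _ _ C HC).
Qed.

(* Adding [Z.abs c] makes the numerator [- c] of [t = - c / (n - 1)] nonnegative. *)
Lemma nat_numerator_mod_1 n t (c : Z) : (2 <= n)%nat -> t = INR n * t + IZR c ->
  exists (l : nat) (m : Z), INR l / INR (n - 1) = t + IZR m.
Proof.
  intros Hn Ht.
  set (L := (- c + Z.abs c * (Z.of_nat n - 1))%Z).
  assert (HL : (0 <= L)%Z) by (unfold L; nia).
  exists (Z.to_nat L), (Z.abs c).
  assert (Pn : 1 < INR n) by (apply lt_1_INR; lia).
  rewrite INR_IZR_INZ, Z2Nat.id, minus_INR by lia. unfold L.
  rewrite plus_IZR, opp_IZR, mult_IZR, minus_IZR, <- INR_IZR_INZ. simpl (INR 1).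
  apply (Rmult_eq_reg_r (INR n - 1)); [|lra].
  field_simplify; [|lra]. nra.
Qed.

Theorem mainTheorem2 (n : nat) (f h : circle -> circle) :
  (2 <= n)%nat ->
  orient_pres_homeo f ->
  orient_pres_homeo h ->
  (forall x, h (f x) = iterate n f (h x)) ->
  exists l : nat, rotation_number_is f (INR l / INR (n - 1)).
Proof.
  intros Hn [F HF] [H HH] Hcomm.
  pose proof (lift_strict_increasing f F HF) as Fi.
  pose proof (lift_int_transl_invariant f F HF) as Ft.
  destruct (lift_semiconj_iterate n f h F H HF HH Hcomm) as [c Hc].
  set (G := fun x => iterate n F x + IZR c).
  assert (Gi : strict_increasing G).
  { intros x y Hxy. unfold G. pose proof (iterate_strict_increasing F n Fi x y Hxy). lra. }
  assert (Gt : int_transl_invariant G).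
  { intros z x. unfold G. rewrite (iterate_int_transl_invariant F n Ft). ring. }
  destruct (translation_number_exists F Fi Ft) as [t Ht].
  assert (Hfix : t = INR n * t + IZR c).
  { apply (translation_number_unique G).
    - exact (translation_number_semiconj F G H t Gi Gt
               (lift_strict_increasing h H HH) (lift_int_transl_invariant h H HH) Hc Ht).
    - apply (translation_number_int_shift (iterate n F)); [|reflexivity|].
      + now apply iterate_int_transl_invariant.
      + now apply translation_number_iterate. }
  destruct (nat_numerator_mod_1 n t c Hn Hfix) as [l [m Hl]].
  exists l. rewrite Hl. exact (rotation_number_of_lift f F t m HF Ht).
Qed.
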